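(* Let $G$ be a graph with $\mathrm{diam}(G)=3$ such that $D_2(G)$ is connected. Then $2\leqslant \mathrm{diam}(D_2(G))\leqslant 5$. Moreover, both inequalities are sharp: there exist graphs $G$ with $\mathrm{diam}(G)=3$, $D_2(G)$ connected and $\mathrm{diam}(D_2(G))=2$, and there exist graphs $G$ with $\mathrm{diam}(G)=3$, $D_2(G)$ connected and $\mathrm{diam}(D_2(G))=5$.
   Context: All graphs are finite, simple and undirected. For a graph $G$, $\mathrm{d}_G(x,y)$ denotes the length of a shortest path between $x$ and $y$, and $\mathrm{diam}(G)$ is the maximum distance between vertices of $G$. The $2$-distance graph $D_2(G)$ of $G$ is the graph with vertex set $V(G)$ in which two vertices $x,y$ are adjacent if and only if $\mathrm{d}_G(x,y)=2$. *)

From mathcomp Require Import all_boot.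
Set Implicit Arguments. Unset Strict Implicit. Unset Printing Implicit Defensive.

Definition simple_graph (T : finType) (e : rel T) : Prop :=
  symmetric e /\ irreflexive e.

Definition walkb (T : finType) (e : rel T) (x y : T) (n : nat) : bool :=
  [exists t : n.-tuple T, path e x t && (last x t == y)].

Definition distb (T : finType) (e : rel T) (x y : T) (n : nat) : bool :=
  walkb e x y n && [forall m : 'I_n, ~~ walkb e x y m].

Definition D2 (T : finType) (e : rel T) : rel T :=
  fun x y => distb e x y 2.

Definition graph_connected (T : finType) (e : rel T) : Prop :=
  forall x y : T, connect e x y.

Definition is_diam (T : finType) (e : rel T) (d : nat) : Prop :=
  (forall x y : T, exists2 n, n <= d & walkb e x y n) /\
  (exists x y : T, distb e x y d).

From mathcomp Require Import all_boot zify.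
Set Implicit Arguments. Unset Strict Implicit. Unset Printing Implicit Defensive.

(* Call two vertices far if their distance in D_2(G) is at least 3; in a graph of
   diameter 3 they are then at distance 1 or 3 and have no common D_2-neighbour.
   If d_{D_2}(x, y) >= 6, the vertex z three steps from x on a shortest D_2-path
   makes x, y, z pairwise far, while x and y are not joined by a D_2-path of
   length 3.  A case analysis on the distances among x, y, z, using only the
   triangle inequality and geodesics between vertices at distance 3, excludes
   this: three mutually adjacent far vertices force diameter at most 2, distances
   1, 3, 3 produce a common D_2-neighbour of a far pair, and d(x, y) = d(x, z) = 3
   yields a D_2-path x u v y.  The lower bound holds because vertices at distance
   3 are distinct and not D_2-adjacent; the sharpness examples are evaluated. *)

Section Walks.
Variables (T : finType) (e : rel T).

Fixpoint walkn (x y : T) (n : nat) : bool :=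
  if n is n'.+1 then [exists z, e x z && walkn z y n'] else x == y.

Lemma walknP x y n :
  reflect (exists p : seq T, [/\ size p = n, path e x p & last x p = y]) (walkn x y n).
Proof.
elim: n x => [|n IH] x /=.
  apply: (iffP eqP) => [<-|[p [/size0nil -> _ <-]]] //; by exists [::].
apply: (iffP existsP) => [[z /andP [xz /(IH z) [p [<- zp <-]]]]|].
  by exists (z :: p); rewrite /= xz zp.
case=> -[|z p] [//= [sz] /andP [xz zp] zpy].
by exists z; rewrite xz; apply/IH; exists p.
Qed.

Lemma walkbE x y n : walkb e x y n = walkn x y n.
Proof.
apply/existsP/walknP => [[t /andP [tp /eqP <-]]|[p [sz xp <-]]].
  by exists t; rewrite size_tuple.
have sz' : size p == n by rewrite sz.
by exists (Tuple sz'); rewrite /= xp eqxx.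
Qed.

Lemma walkn1 x y : walkn x y 1 = e x y.
Proof.
by apply/existsP/idP => [[z /andP [xz /eqP <-]] | xy] //; exists y; rewrite xy /=.
Qed.

Lemma walknD x y z m n : walkn x y m -> walkn y z n -> walkn x z (m + n).
Proof.
elim: m x => [|m IH] x /=; first by move/eqP ->.
by case/existsP => u /andP [xu uy] yz; apply/existsP; exists u; rewrite xu (IH u).
Qed.

Lemma walkn_split x z m n : walkn x z (m + n) -> exists2 y, walkn x y m & walkn y z n.
Proof.
elim: m x => [|m IH] x /=; first by exists x.
case/existsP => u /andP [xu /IH [y uy yz]]; exists y => //.
by apply/existsP; exists u; rewrite xu.
Qed.

Lemma connect_walknP x y : reflect (exists n, walkn x y n) (connect e x y).
Proof.
apply: (iffP connectP) => [[p xp ->]|[n /walknP [p [_ xp <-]]]]; last by exists p.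
by exists (size p); apply/walknP; exists p.
Qed.

Lemma is_diam_connected d : is_diam e d -> graph_connected e.
Proof.
case=> walk_le _ x y; have [n _] := walk_le x y.
by rewrite walkbE => W; apply/connect_walknP; exists n.
Qed.

Lemma D2E x y : D2 e x y = [&& walkn x y 2, x != y & ~~ e x y].
Proof.
rewrite /D2 /distb walkbE; congr andb.
apply/forallP/andP => [short | [neq nxy] [[|[|m]] //= _]]; rewrite ?walkbE //.
  have := short ord0; have := short (Ordinal (isT : 1 < 2)).
  by rewrite !walkbE walkn1 => ->.
by rewrite walkn1.
Qed.

Hypothesis e_sym : symmetric e.

Lemma walkn_sym x y n : walkn x y n = walkn y x n.
Proof.
suff rev a b : walkn a b n -> walkn b a n by apply/idP/idP; apply: rev.
elim: n a => [|n IH] a; first by rewrite /= eq_sym.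
case/existsP => z /andP [az /IH zb]; rewrite -addn1; apply: walknD zb _.
by rewrite walkn1 e_sym.
Qed.

End Walks.

Lemma eq_walkb (T : finType) (e1 e2 : rel T) : e1 =2 e2 ->
  forall x y n, walkb e1 x y n = walkb e2 x y n.
Proof. by move=> E x y n; apply: eq_existsb => t; rewrite (eq_path E). Qed.

Lemma eq_is_diam (T : finType) (e1 e2 : rel T) d : e1 =2 e2 -> is_diam e1 d -> is_diam e2 d.
Proof.
move=> E [walk_le [x [y dxy]]]; split.
  by move=> a b; have [n le_n] := walk_le a b; exists n; rewrite -?(eq_walkb E).
exists x, y; move: dxy; rewrite /distb (eq_walkb E); congr andb.
by apply: eq_forallb => m; rewrite (eq_walkb E).
Qed.

Section Distance.
Variables (T : finType) (e : rel T).
Hypothesis e_conn : graph_connected e.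

Lemma walkn_exists x y : exists n, walkn e x y n.
Proof. exact/connect_walknP. Qed.

Definition dist x y : nat := ex_minn (walkn_exists x y).

Lemma dist_walkn x y : walkn e x y (dist x y).
Proof. by rewrite /dist; case: ex_minnP. Qed.

Lemma walkn_dist x y n : walkn e x y n -> dist x y <= n.
Proof. by rewrite /dist; case: ex_minnP => m _ min_m /min_m. Qed.

Lemma distbE x y n : distb e x y n = (dist x y == n).
Proof.
rewrite /distb walkbE; apply/andP/eqP => [[W /forallP short]|<-].
  apply/eqP; rewrite eqn_leq walkn_dist // leqNgt; apply/negP => lt_dn.
  by have := short (Ordinal lt_dn); rewrite walkbE dist_walkn.
split; first exact: dist_walkn.
by apply/forallP => m; rewrite walkbE; apply/negP => /walkn_dist; rewrite leqNgt ltn_ord.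
Qed.

Lemma is_diamP d :
  is_diam e d <-> (forall x y, dist x y <= d) /\ exists x y, dist x y = d.
Proof.
split=> [[walk_le [x [y dxy]]] | [dist_le [x [y dxy]]]]; split.
- move=> a b; have [n le_n] := walk_le a b.
  by rewrite walkbE => /walkn_dist /leq_trans; apply.
- by exists x, y; apply/eqP; rewrite -distbE.
- by move=> a b; exists (dist a b); rewrite ?walkbE ?dist_walkn.
- by exists x, y; rewrite distbE dxy.
Qed.

Lemma exists_is_diam (x0 : T) : exists d, is_diam e d.
Proof.
pose F (p : T * T) := dist p.1 p.2.
have [[x y] max_xy] : {p | \max_p F p = F p}.
  by apply: eq_bigmax; apply/card_gt0P; exists (x0, x0).
exists (\max_p F p); apply/is_diamP; split; last by exists x, y.
by move=> a b; apply: (@leq_bigmax _ F (a, b)).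
Qed.

Lemma dist_eq0 x y : (dist x y == 0) = (x == y).
Proof.
apply/eqP/eqP => [d0 | ->]; first by have := dist_walkn x y; rewrite d0 => /eqP.
by apply/eqP; rewrite -leqn0; apply: walkn_dist => /=.
Qed.

Lemma dist_triangle x y z : dist x z <= dist x y + dist y z.
Proof. exact: walkn_dist (walknD (dist_walkn x y) (dist_walkn y z)). Qed.

Lemma dist_succ x y n : dist x y = n.+1 -> exists2 a, dist x a = 1 & dist a y = n.
Proof.
move=> dxy; have := dist_walkn x y; rewrite dxy /= => /existsP [a /andP [xa ay]].
have xa_le1 : dist x a <= 1 by apply: walkn_dist; rewrite walkn1.
have := walkn_dist ay; have := dist_triangle x a y.
by exists a; lia.
Qed.

Hypothesis e_sym : symmetric e.

Lemma dist_sym x y : dist x y = dist y x.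
Proof. by apply/eqP; rewrite eqn_leq !walkn_dist // walkn_sym // dist_walkn. Qed.

End Distance.

Section DiameterThreeMetric.
Variables (T : Type) (g : T -> T -> nat).
Hypotheses (g_sym : forall x y, g x y = g y x)
  (g_triangle : forall x y z, g x z <= g x y + g y z)
  (g_le3 : forall x y, g x y <= 3)
  (g_geodesic3 : forall x y, g x y = 3 ->
     exists a b, [/\ g x a = 1, g a b = 1 & g b y = 1]).

(* x and y are at distance at least 3 in the graph of pairs at g-distance 2. *)
Definition far x y := [/\ g x y <> 0, g x y <> 2 & forall w, g x w = 2 -> g w y <> 2].

Definition unit_far x y := far x y /\ g x y = 1.

Lemma far_sym x y : far x y -> far y x.
Proof.
case=> xy0 xy2 no_mid; split; rewrite 1?g_sym //.
by move=> w yw2 wx2; apply: (no_mid w); rewrite g_sym.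
Qed.

Lemma unit_far_sym x y : unit_far x y -> unit_far y x.
Proof. by case=> /far_sym ? xy; split; rewrite // g_sym. Qed.

Lemma far_dist x y : far x y -> g x y = 1 \/ g x y = 3.
Proof. by case=> xy0 xy2 _; have := g_le3 x y; lia. Qed.

Lemma far_unit_dist3 p q r : far p q -> far q r -> g p q = 1 -> g p r = 3 -> g q r <> 3.
Proof.
move=> [_ _ pq_far] [_ _ qr_far] pq1 pr3 qr3.
have [a [b [pa1 ab1 br1]]] := g_geodesic3 pr3.
have pb2 : g p b = 2 by have := g_triangle p a b; have := g_triangle p b r; lia.
have qb3 : g q b = 3.
  have := pq_far b pb2; have := g_triangle q b r; have := g_le3 q b.
  by rewrite (g_sym b q); lia.
have qa2 : g q a = 2.
  have := g_triangle q a b; have := g_triangle q p a; rewrite (g_sym q p); lia.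
have ar2 : g a r = 2 by have := g_triangle p a r; have := g_triangle a b r; lia.
exact: qr_far qa2 ar2.
Qed.

Lemma unit_far_triangle_dist3 p q r w : unit_far p q -> unit_far p r -> unit_far q r ->
  g w p = 3 -> g w q <> 3.
Proof.
move=> [[_ _ pq_far] pq1] [[_ _ pr_far] pr1] [[_ _ qr_far] qr1] wp3 wq3.
have [a [b [wa1 ab1 bp1]]] := g_geodesic3 wp3.
have pa2 : g p a = 2.
  have := g_triangle w a p; have := g_triangle a b p; rewrite (g_sym p a); lia.
have aq3 : g a q = 3.
  have := pq_far a pa2; have := g_triangle w a q; have := g_le3 a q; lia.
have qb2 : g q b = 2.
  have := g_triangle a b q; have := g_triangle b p q; rewrite (g_sym q b); lia.
have ar3 : g a r = 3.
  have := pr_far a pa2; have := g_triangle a r q; have := g_le3 a r;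
  rewrite (g_sym r q); lia.
have br2 : g b r = 2.
  have := g_triangle a b r; have := g_triangle b p r; lia.
exact: qr_far qb2 br2.
Qed.

Section UnitFarTriangle.
Variables x y z : T.
Hypotheses (xy : unit_far x y) (xz : unit_far x z) (yz : unit_far y z).

Lemma unit_far_triangle_near w :
  (g w x <= 1 /\ g w y <= 1) \/ (g w x <= 1 /\ g w z <= 1) \/ (g w y <= 1 /\ g w z <= 1).
Proof.
have := unit_far_triangle_dist3 (w := w) xy xz yz.
have := unit_far_triangle_dist3 (w := w) xz xy (unit_far_sym yz).
have := unit_far_triangle_dist3 (w := w) yz (unit_far_sym xy) (unit_far_sym xz).
case: xy xz yz => [[_ _ xy_far] xy1] [[_ _ xz_far] xz1] [[_ _ yz_far] yz1].
have := xy_far w; have := xz_far w; have := yz_far w.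
have := g_triangle w x y; have := g_triangle w y x; have := g_triangle w x z;
have := g_triangle w z x; have := g_triangle w y z; have := g_triangle w z y.
rewrite (g_sym x w) (g_sym y w) (g_sym y x) (g_sym z x) (g_sym z y).
have := g_le3 w x; have := g_le3 w y; have := g_le3 w z.
lia.
Qed.

Lemma unit_far_triangle_diam2 s t : g s t <= 2.
Proof.
have := unit_far_triangle_near s; have := unit_far_triangle_near t.
have := g_triangle s x t; have := g_triangle s y t; have := g_triangle s z t.
rewrite (g_sym x t) (g_sym y t) (g_sym z t).
lia.
Qed.

End UnitFarTriangle.

Lemma dist3_chain3 x y z : g x y = 3 -> g x z = 3 -> far y z -> far x z ->
  exists u v, [/\ g x u = 2, g u v = 2 & g v y = 2].
Proof.
move=> xy3 xz3 [_ _ yz_far] [_ _ xz_far].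
have [p [q [xp1 pq1 qy1]]] := g_geodesic3 xy3.
have py2 : g p y = 2 by have := g_triangle x p y; have := g_triangle p q y; lia.
have pz3 : g p z = 3.
  have := yz_far p; have := g_triangle x p z; have := g_le3 p z; rewrite (g_sym y p); lia.
have [u [w [pu1 uw1 wz1]]] := g_geodesic3 pz3.
have uz2 : g u z = 2 by have := g_triangle p u z; have := g_triangle u w z; lia.
have wp2 : g w p = 2.
  have := g_triangle p w z; have := g_triangle p u w; rewrite (g_sym w p); lia.
have xw2 : g x w = 2.
  have := xz_far u; have := g_triangle x u w; have := g_triangle x p u;
  have := g_triangle x w z; have := g_le3 x w; lia.
by exists w, p.
Qed.

Lemma far_triple_chain3 x y z s t : far x y -> far x z -> far y z -> g s t = 3 ->
  exists u v, [/\ g x u = 2, g u v = 2 & g v y = 2].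
Proof.
move=> xy_far xz_far yz_far st3.
have := g_triangle x y z; have := g_triangle y x z; have := g_triangle x z y.
rewrite (g_sym y x) (g_sym z y).
case: (far_dist xy_far) => xy; case: (far_dist xz_far) => xz;
  case: (far_dist yz_far) => yz; try lia; move=> _ _ _.
- have := unit_far_triangle_diam2 (conj xy_far xy) (conj xz_far xz) (conj yz_far yz) s t.
  lia.
- by case: (far_unit_dist3 xy_far yz_far xy xz).
- by case: (far_unit_dist3 xz_far (far_sym yz_far) xz xy); rewrite g_sym.
- exact: dist3_chain3 xy xz yz_far xz_far.
- exact: dist3_chain3 xy xz yz_far xz_far.
Qed.

End DiameterThreeMetric.

Section TwoDistanceGraph.
Variables (T : finType) (e : rel T).
Hypotheses (e_sym : symmetric e) (e_diam3 : is_diam e 3).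
Hypothesis D2_conn : graph_connected (D2 e).

Let e_conn := is_diam_connected e_diam3.
Local Notation g := (dist e_conn).
Local Notation dD := (dist D2_conn).

Lemma D2_dist x y : D2 e x y = (g x y == 2).
Proof. exact: distbE. Qed.

Let g_sym x y : g x y = g y x.
Proof. exact: dist_sym. Qed.

Let g_le3 x y : g x y <= 3.
Proof. by have [le3 _] := (is_diamP e_conn 3).1 e_diam3. Qed.

Let g_geodesic3 x y : g x y = 3 -> exists a b, [/\ g x a = 1, g a b = 1 & g b y = 1].
Proof. by case/dist_succ => a xa /dist_succ [b ab by1]; exists a, b. Qed.

Lemma D2_dist_le1 x y : g x y = 2 -> dD x y <= 1.
Proof. by move=> xy; apply: walkn_dist; rewrite walkn1 D2_dist xy. Qed.

Lemma far_of_D2_dist x y : 3 <= dD x y -> far g x y.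
Proof.
move=> xy_ge3; split.
- by move/eqP; rewrite dist_eq0 -(dist_eq0 D2_conn) => /eqP xy; rewrite xy in xy_ge3.
- by move/D2_dist_le1; lia.
- move=> w /D2_dist_le1 xw /D2_dist_le1 wy.
  have := dist_triangle D2_conn x w y; lia.
Qed.

Lemma D2_dist_chain3 x u v y : g x u = 2 -> g u v = 2 -> g v y = 2 -> dD x y <= 3.
Proof.
move=> /D2_dist_le1 xu /D2_dist_le1 uv /D2_dist_le1 vy.
have := dist_triangle D2_conn x u y; have := dist_triangle D2_conn u v y; lia.
Qed.

Let exists_dist3 : exists x y, g x y = 3.
Proof. by have [_] := (is_diamP e_conn 3).1 e_diam3. Qed.

Lemma D2_dist_le5 x y : dD x y <= 5.
Proof.
rewrite leqNgt; apply/negP => xy_gt5.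
have [s [t st3]] := exists_dist3.
have : walkn (D2 e) x y (3 + (dD x y - 3)) by rewrite subnKC ?dist_walkn //; lia.
case/walkn_split => z /(walkn_dist D2_conn) xz /(walkn_dist D2_conn) zy.
have xy_le := dist_triangle D2_conn x z y.
have far_xy : far g x y by apply: far_of_D2_dist; lia.
have far_xz : far g x z by apply: far_of_D2_dist; lia.
have far_yz : far g y z by apply: (far_sym g_sym); apply: far_of_D2_dist; lia.
have [u [v [xu uv vy]]] :=
  far_triple_chain3 g_sym (dist_triangle e_conn) g_le3 g_geodesic3 far_xy far_xz far_yz st3.
by have := D2_dist_chain3 xu uv vy; lia.
Qed.

Lemma D2_dist_ge2 x y : g x y = 3 -> 2 <= dD x y.
Proof.
move=> xy3; rewrite ltnNge; apply/negP => xy_le1.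
have x_neq_y : x != y by rewrite -(dist_eq0 e_conn) xy3.
case: (dD x y) (dist_walkn D2_conn x y) xy_le1 => [|[|//]] W _.
- by move: W => /eqP xy; rewrite xy eqxx in x_neq_y.
- by rewrite walkn1 D2_dist xy3 in W.
Qed.

Lemma D2_diam_bounds : exists2 d, is_diam (D2 e) d & 2 <= d <= 5.
Proof.
have [s [t st3]] := exists_dist3.
have [d diam_d] := exists_is_diam D2_conn s.
exists d => //; have [d_max [x [y xy_d]]] := (is_diamP D2_conn d).1 diam_d.
by rewrite (leq_trans (D2_dist_ge2 st3) (d_max s t)) -xy_d D2_dist_le5.
Qed.

End TwoDistanceGraph.

Section EnumeratedGraphs.
Variables (T : finType) (vs : seq T).
Hypothesis mem_vs : forall x, x \in vs.

(* Finite quantifiers over ['I_n] do not evaluate (its enumeration goes through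
   opaque proofs), so the examples are evaluated over an explicit list [vs] of all
   vertices, computing the sources of the walks of length n to y level by level. *)
Fixpoint walk_sources (e : rel T) (y : T) (n : nat) : seq T :=
  if n is n'.+1 then let S := walk_sources e y n' in [seq x <- vs | has (e x) S]
  else [:: y].

Definition walkn_seq (e : rel T) x y n := x \in walk_sources e y n.

Lemma walkn_seqE e x y n : walkn_seq e x y n = walkn e x y n.
Proof.
rewrite /walkn_seq; elim: n x => [|n IH] x /=; first by rewrite inE.
rewrite mem_filter mem_vs andbT.
apply/hasP/existsP => [[z zy xz]|[z /andP [xz zy]]]; first by exists z; rewrite xz -IH.
by exists z; rewrite ?IH.
Qed.

Definition D2_seq (e : rel T) : rel T :=
  fun x y => [&& walkn_seq e x y 2, x != y & ~~ e x y].

Lemma D2_seqE e : D2 e =2 D2_seq e.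
Proof. by move=> x y; rewrite D2E /D2_seq walkn_seqE. Qed.

Definition is_diam_seq (e : rel T) (d : nat) : bool :=
  all (fun x => all (fun y => has (walkn_seq e x y) (iota 0 d.+1)) vs) vs &&
  has (fun x => has (fun y =>
    walkn_seq e x y d && ~~ has (walkn_seq e x y) (iota 0 d)) vs) vs.

Lemma is_diam_seq_sound e d : is_diam_seq e d -> is_diam e d.
Proof.
case/andP => /allP walk_le /hasP [x _ /hasP [y _ /andP [xy_d short]]]; split.
  move=> a b; have /allP /(_ b (mem_vs b)) /hasP [n] := walk_le a (mem_vs a).
  by rewrite mem_iota ltnS walkn_seqE => /andP [_ n_le] ?; exists n; rewrite ?walkbE.
exists x, y; rewrite /distb walkbE -walkn_seqE xy_d; apply/forallP => m.
rewrite walkbE -walkn_seqE; apply: contra short => xy_m.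
by apply/hasP; exists (val m); rewrite // mem_iota ltn_ord.
Qed.

End EnumeratedGraphs.

Fixpoint ord_seq n : seq 'I_n :=
  if n is n'.+1 then ord0 :: map (lift ord0) (ord_seq n') else [::].

Lemma mem_ord_seq n (i : 'I_n) : i \in ord_seq n.
Proof.
elim: n i => [[]//|n IH] i /=; rewrite inE.
by case: (unliftP ord0 i) => [j ->|->]; rewrite ?eqxx // map_f ?orbT.
Qed.

Definition edge_graph n (E : seq (nat * nat)) : rel 'I_n :=
  fun x y => ((val x, val y) \in E) || ((val y, val x) \in E).
Arguments edge_graph : clear implicits.

Lemma edge_graph_simple n E : all (fun p => p.1 != p.2) E -> simple_graph (edge_graph n E).
Proof.
move=> /allP loopless; split=> [x y | x]; first by rewrite /edge_graph orbC.
by rewrite /edge_graph orbb; apply/negP => /loopless; rewrite /= eqxx.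
Qed.

Lemma edge_graph_diam3_D2 n E d : let G := edge_graph n E in
  all (fun p => p.1 != p.2) E -> is_diam_seq (ord_seq n) G 3 ->
  is_diam_seq (ord_seq n) (D2_seq (ord_seq n) G) d ->
  [/\ simple_graph G, is_diam G 3, graph_connected (D2 G) & is_diam (D2 G) d].
Proof.
move=> G loopless /(is_diam_seq_sound (@mem_ord_seq n)) G_diam.
move=> /(is_diam_seq_sound (@mem_ord_seq n)) /eq_is_diam D2G_diam.
have {}D2G_diam : is_diam (D2 G) d.
  by apply: D2G_diam => x y; rewrite (D2_seqE (@mem_ord_seq n)).
by split; [exact: edge_graph_simple | | exact: is_diam_connected D2G_diam |].
Qed.

Definition D2_diam2_graph :=
  edge_graph 7 [:: (0, 1); (1, 2); (2, 3); (3, 4); (4, 5); (5, 0); (6, 0); (6, 3)].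

Definition D2_diam5_graph :=
  edge_graph 6 [:: (0, 1); (0, 3); (0, 5); (1, 2); (1, 3); (1, 4); (2, 3); (2, 4)].

Theorem corollary2p9 :
  (forall (T : finType) (e : rel T),
      simple_graph e -> is_diam e 3 -> graph_connected (D2 e) ->
      exists2 d, is_diam (D2 e) d & 2 <= d <= 5)
  /\ (exists (T : finType) (e : rel T),
        [/\ simple_graph e, is_diam e 3, graph_connected (D2 e) & is_diam (D2 e) 2])
  /\ (exists (T : finType) (e : rel T),
        [/\ simple_graph e, is_diam e 3, graph_connected (D2 e) & is_diam (D2 e) 5]).
Proof.
split; last split.
- by move=> T e [e_sym _]; apply: D2_diam_bounds.
- by exists _, D2_diam2_graph; apply: edge_graph_diam3_D2; vm_compute.
- by exists _, D2_diam5_graph; apply: edge_graph_diam3_D2; vm_compute.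
Qed.
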